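(* Let $\mathcal G=(V,E,r)$ be a graph. The monoid of agglomerations $\mathbf A(\mathcal G)$ is a finitely generated reduced Krull monoid, and its divisor theory has $3|E|+\iota$ prime divisors, where $\iota$ is the number of isolated vertices of $\mathcal G$.
   Context: A graph $\mathcal G=(V,E,r)$ consists of a finite vertex set $V$, a finite edge set $E$ disjoint from $V$, and a map $r$ assigning to each edge a two-element subset of $V$; multiple edges allowed, no loops. An isolated vertex is one incident with no edge. An agglomeration on $\mathcal G$ is a function $a\colon V\cup E\to\mathbb N_0$ with $a(v)\ge a(e)$ whenever $v$ is incident with $e$; $\mathbf A(\mathcal G)$ is the monoid of agglomerations under pointwise addition. A monoid homomorphism $\varphi\colon H\to D$ is a divisor homomorphism if $\varphi(a)$ being a summand of $\varphi(b)$ in $D$ implies $a$ is a summand of $b$ in $H$. A cancellative monoid is Krull if it has a divisor homomorphism into a free monoid $\mathbb N_0^{(I)}$. A divisor theory is a divisor homomorphism $\varphi\colon H\to\mathbb N_0^{(I)}$ such that every standard basis vector $\vec e_i$ equals the pointwise minimum of finitely many $\varphi(a_1),\dots,\varphi(a_k)$ with $a_j\in H$; divisor theories are unique up to isomorphism, and the number of prime divisors is the cardinality of $I$. *)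

From HB Require Import structures.
From mathcomp Require Import all_boot all_order all_algebra.
Set Implicit Arguments. Unset Strict Implicit. Unset Printing Implicit Defensive.
Import GRing.Theory.
Local Open Scope ring_scope.

Section MonoidNotions.
Variable H : nmodType.

Definition msummand (a b : H) : Prop := exists c : H, b = a + c.

Definition mcancellative : Prop := forall a b c : H, a + b = a + c -> b = c.

Definition mreduced : Prop := forall a b : H, a + b = 0 -> a = 0.

Definition mfinitely_generated : Prop :=
  exists s : seq H, forall x : H, exists n : nat -> nat,
    x = \sum_(i < size s) s`_i *+ n i.

(* The free monoid N_0^(I): finitely supported functions I -> nat,
   with pointwise addition. *)
Definition fin_supp (I : eqType) (f : I -> nat) : Prop :=
  exists s : seq I, forall i, i \notin s -> f i = 0%N.

Definition free_hom (I : eqType) (phi : H -> I -> nat) : Prop :=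
  [/\ forall a, fin_supp (phi a),
      forall i, phi 0 i = 0%N &
      forall a b i, phi (a + b) i = (phi a i + phi b i)%N].

Definition free_summand (I : eqType) (f g : I -> nat) : Prop :=
  exists d : I -> nat, fin_supp d /\ forall i, g i = (f i + d i)%N.

Definition divisor_hom (I : eqType) (phi : H -> I -> nat) : Prop :=
  free_hom phi /\
  forall a b : H, free_summand (phi a) (phi b) -> msummand a b.

Definition Krull : Prop :=
  mcancellative /\ exists (I : eqType) (phi : H -> I -> nat), divisor_hom phi.

Definition min_images (I : eqType) (phi : H -> I -> nat) (a0 : H) (s : seq H)
  (j : I) : nat := foldr (fun a m => minn (phi a j) m) (phi a0 j) s.

Definition divisor_theory (I : eqType) (phi : H -> I -> nat) : Prop :=
  divisor_hom phi /\
  forall i : I, exists (a0 : H) (s : seq H),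
    forall j : I, min_images phi a0 s j = (i == j : nat).

End MonoidNotions.

(* A graph (V,E,r): finite types V (vertices) and E (edges), disjoint by
   construction, and r : E -> {set V} with #|r e| = 2 (multi-edges allowed,
   no loops). *)
Definition is_graph (V E : finType) (r : E -> {set V}) : Prop :=
  forall e : E, #|r e| = 2%N.

Definition isolated (V E : finType) (r : E -> {set V}) (v : V) : bool :=
  [forall e : E, v \notin r e].

Definition n_isolated (V E : finType) (r : E -> {set V}) : nat :=
  #|[set v : V | isolated r v]|.

Definition is_agglomeration (V E : finType) (r : E -> {set V})
  (a : {ffun V + E -> nat}) : bool :=
  [forall e : E, forall v : V, (v \in r e) ==> (a (inr e) <= a (inl v))%N].

Lemma agg_addr_closed (V E : finType) (r : E -> {set V}) :
  addr_closed (is_agglomeration r).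
Proof.
split.
  by rewrite unfold_in; apply/forallP=> e; apply/forallP=> v; rewrite !ffunE implybT.
move=> a b; rewrite !unfold_in => /forallP Ha /forallP Hb; apply/forallP=> e; apply/forallP=> v.
apply/implyP=> Hv; rewrite !ffunE.
by apply: leq_add; [move/forallP: (Ha e) => /(_ v)/implyP; apply | move/forallP: (Hb e) => /(_ v)/implyP; apply].
Qed.

Record agglomeration (V E : finType) (r : E -> {set V}) :=
  Agg { agg_val :> {ffun V + E -> nat}; _ : is_agglomeration r agg_val }.
HB.instance Definition _ V E r := [isSub for @agg_val V E r].
HB.instance Definition _ V E r := [Choice of @agglomeration V E r by <:].

Section AggMonoid.
Variables (V E : finType) (r : E -> {set V}).
Local Notation A := (agglomeration r).

Definition agg_zero : A := Agg (proj1 (agg_addr_closed r)).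
Definition agg_add (a b : A) : A :=
  Agg (proj2 (agg_addr_closed r) _ _ (valP a) (valP b)).

Lemma agg_addA : associative agg_add.
Proof. by move=> a b c; apply: val_inj; rewrite /= addrA. Qed.
Lemma agg_addC : commutative agg_add.
Proof. by move=> a b; apply: val_inj; rewrite /= addrC. Qed.
Lemma agg_add0 : left_id agg_zero agg_add.
Proof. by move=> a; apply: val_inj; rewrite /= add0r. Qed.

HB.instance Definition _ :=
  GRing.isNmodule.Build A agg_addA agg_addC agg_add0.

Lemma agg_valD (a b : A) : agg_val (a + b) = agg_val a + agg_val b.
Proof. by []. Qed.
Lemma agg_val0 : agg_val (0 : A) = 0.
Proof. by []. Qed.
End AggMonoid.

(* Sending an agglomeration a to its values a(e) on edges, a(v) - a(e) on
   incidences v ∈ r(e) and a(v) on isolated vertices is a divisor homomorphism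
   into N_0^(3|E| + ι): if these coordinates of a are below those of b, then
   b - a is again an agglomeration.  Each unit vector is the pointwise minimum
   of the images of at most three 0/1-valued agglomerations, so this is a
   divisor theory.  The level sets [a > k] of an agglomeration are 0/1-valued
   agglomerations summing to a, hence the monoid is finitely generated.
   Finally, the number of prime divisors does not depend on the divisor theory:
   the comparison of pointwise minima of images of finite lists can be phrased
   inside the monoid, and this transports unit vectors injectively from one
   divisor theory to any other. *)

From HB Require Import structures.
From mathcomp Require Import all_boot all_order all_algebra.
From mathcomp Require Import zify.
Set Implicit Arguments. Unset Strict Implicit. Unset Printing Implicit Defensive.
Import GRing.Theory.

Section MonoidSpan.
Variable H : nmodType.

Definition span (s : seq H) (x : H) : Prop :=
  exists n : nat -> nat, x = (\sum_(i < size s) s`_i *+ n i)%R.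

Lemma span0 s : span s 0%R.
Proof. by exists (fun _ => 0); rewrite big1 // => i _; rewrite mulr0n. Qed.

Lemma spanD s x y : span s x -> span s y -> span s (x + y)%R.
Proof.
move=> [n ->] [m ->]; exists (fun i => n i + m i).
by rewrite -big_split; apply: eq_bigr => i _; rewrite mulrnDr.
Qed.

Lemma span_mem s x : x \in s -> span s x.
Proof.
move=> xs; have x_lt : index x s < size s by rewrite index_mem.
exists (fun i => i == index x s :> nat).
rewrite (bigD1 (Ordinal x_lt)) //= eqxx mulr1n nth_index // big1 ?addr0 // => i.
by rewrite -val_eqE /= => /negbTE ->.
Qed.

Lemma span_sum s n (F : 'I_n -> H) :
  (forall k, F k \in s) -> span s (\sum_k F k)%R.
Proof.
by move=> Fs; apply: big_ind; [apply: span0 | apply: spanD | move=> k _; apply: span_mem].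
Qed.

Lemma finitely_generated_by s : (forall x, span s x) -> mfinitely_generated H.
Proof. by exists s. Qed.

End MonoidSpan.

Section PointwiseMin.
Variable H : nmodType.

Definition pointwise_min (I : Type) (phi : H -> I -> nat) (L : seq H) (x : I -> nat) :=
  forall i, (forall c, c \in L -> x i <= phi c i) /\ exists2 c, c \in L & phi c i = x i.

Lemma min_images_pointwise_min (I : eqType) (phi : H -> I -> nat) a0 s :
  pointwise_min phi (a0 :: s) (min_images phi a0 s).
Proof.
move=> i; elim: s => [|c s [lb [d ds di]]].
  by split=> [c /[!inE] /eqP-> | ]; [|exists a0; rewrite ?inE].
have -> : min_images phi a0 (c :: s) i = minn (phi c i) (min_images phi a0 s i)
  by [].
split.
  move=> c' /[!inE] /or3P [/eqP-> | /eqP-> | c's].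
  - by rewrite geq_min lb ?mem_head ?orbT.
  - by rewrite geq_minl.
  - by rewrite geq_min lb ?inE ?c's ?orbT.
rewrite -di; case: (leqP (phi c i) (phi d i)) => [le_cd | lt_dc].
  by exists c; rewrite ?inE ?eqxx ?orbT //; lia.
by exists d; [move: ds; rewrite !inE => /orP [] -> | lia]; rewrite ?orbT.
Qed.

Lemma eq_pointwise_min (I : Type) (phi : H -> I -> nat) L x y :
  (forall i, x i = y i) -> pointwise_min phi L x -> pointwise_min phi L y.
Proof. by move=> e h i; rewrite -e; apply: h. Qed.

Lemma pointwise_min_add (I : Type) (phi : H -> I -> nat) L M x y :
  (forall a b i, phi (a + b)%R i = phi a i + phi b i) ->
  pointwise_min phi L x -> pointwise_min phi M y ->
  pointwise_min phi [seq (a + b)%R | a <- L, b <- M] (fun i => x i + y i).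
Proof.
move=> phiD hx hy i; have [lbx [a aL ea]] := hx i; have [lby [b bM eb]] := hy i.
split; last by exists (a + b)%R; [apply: allpairs_f | rewrite phiD ea eb].
by move=> _ /allpairsP [[a' b'] [/= a'L b'M ->]]; rewrite phiD leq_add ?lbx ?lby.
Qed.

Lemma free_hom_summand_le (I : eqType) (phi : H -> I -> nat) a b :
  free_hom phi -> msummand a b -> forall i, phi a i <= phi b i.
Proof. by case=> _ _ phiD [c ->] i; rewrite phiD leq_addr. Qed.

Lemma divisor_hom_summand (I : eqType) (phi : H -> I -> nat) a b :
  divisor_hom phi -> (forall i, phi a i <= phi b i) -> msummand a b.
Proof.
move=> [[fs _ _] dvd] le; apply: dvd; exists (fun i => phi b i - phi a i).
split; last by move=> i; rewrite subnKC.
by have [s sb] := fs b; exists s => i /sb ->.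
Qed.

Lemma free_hom_divisor_hom (I : eqType) (phi : H -> I -> nat) :
  free_hom phi -> (forall a b, (forall i, phi a i <= phi b i) -> msummand a b) ->
  divisor_hom phi.
Proof.
by move=> hom dvd; split=> // a b [d [_ e]]; apply: dvd => i; rewrite e leq_addr.
Qed.

Lemma divisor_theory_pointwise_min (I : finType) (psi : H -> I -> nat) :
  divisor_theory psi -> forall y : I -> nat, exists L, pointwise_min psi L y.
Proof.
move=> [[[_ psi0 psiD] _] prime].
have delta i : exists L, pointwise_min psi L (fun j => i == j : nat).
  have [a0 [s e]] := prime i; exists (a0 :: s).
  exact: eq_pointwise_min e (min_images_pointwise_min psi a0 s).
suff: forall n y, \sum_i y i = n -> exists L, pointwise_min psi L y.
  by move=> P y; apply: P.
elim=> [|n IHn] y sum_y.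
  have y0 i : y i = 0 by move/eqP: sum_y; rewrite sum_nat_eq0 => /forallP /(_ i) /eqP.
  exists [:: 0%R] => i; rewrite y0; split; last by exists 0%R; rewrite ?inE ?psi0.
  by move=> c /[!inE] /eqP ->; rewrite psi0.
have [i yi] : exists i, 0 < y i.
  apply/existsP; apply: contraT; rewrite negb_exists => /forallP y0.
  suff: \sum_i y i == 0 by rewrite sum_y.
  by rewrite sum_nat_eq0; apply/forallP => i; have := y0 i; rewrite lt0n negbK.
pose y' j := y j - (i == j).
have [|L hL] := IHn y'.
  move: sum_y; rewrite (bigD1 i) //= => sum_y; rewrite (bigD1 i) //= /y' eqxx.
  rewrite (eq_bigr y) => [|j /negbTE]; last by rewrite eq_sym => ->; rewrite subn0.
  lia.
have [M hM] := delta i; exists [seq (a + b)%R | a <- L, b <- M].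
apply: eq_pointwise_min (pointwise_min_add psiD hL hM) => j.
by rewrite /y'; case: eqP => [<-|_]; lia.
Qed.

(* An intrinsic form of "the pointwise minimum of phi over L is below that over
   L'", valid for every divisor theory phi. *)
Definition gcd_dvd (L L' : seq H) : Prop :=
  forall a (T : seq H), (forall s t, s \in L -> t \in T -> msummand a (s + t)%R) ->
  forall s' t, s' \in L' -> t \in T -> msummand a (s' + t)%R.

Lemma divisor_hom_gcd_dvd (I : eqType) (phi : H -> I -> nat) L L' x x' :
  divisor_hom phi -> pointwise_min phi L x -> pointwise_min phi L' x' ->
  (forall i, x i <= x' i) -> gcd_dvd L L'.
Proof.
move=> dphi hx hx' le_xx' a T dvd s' t s'L' tT.
have [[_ _ phiD] _] := dphi; apply: (divisor_hom_summand dphi) => i.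
have [_ [s sL xi]] := hx i; have [lbx' _] := hx' i.
have := free_hom_summand_le dphi.1 (dvd s t sL tT) i.
rewrite !phiD xi; have := le_xx' i; have := lbx' s' s'L'; lia.
Qed.

Lemma divisor_theory_gcd_dvd (I : finType) (psi : H -> I -> nat) L L' y y' :
  divisor_theory psi -> pointwise_min psi L y -> pointwise_min psi L' y' ->
  gcd_dvd L L' -> forall i, y i <= y' i.
Proof.
move=> dpsi hy hy' dvd i; have [[_ _ psiD] _] := dpsi.1.
have [_ [a aL _]] := hy i.
have [T hT] := divisor_theory_pointwise_min dpsi (fun j => psi a j - y j).
have a_dvd s t : s \in L -> t \in T -> msummand a (s + t)%R.
  move=> sL tT; apply: (divisor_hom_summand dpsi.1) => j; rewrite psiD.
  have [lby _] := hy j; have [lbT _] := hT j.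
  have := lby _ aL; have := lby _ sL; have := lbT _ tT; lia.
have [_ [s' s'L' <-]] := hy' i; have [_ [t tT ti]] := hT i.
have := free_hom_summand_le dpsi.1.1 (dvd a T a_dvd s' t s'L' tT) i.
have [lby _] := hy i; have := lby _ aL; rewrite psiD ti; lia.
Qed.

End PointwiseMin.

Section MinImagesTransfer.
Variables (H : nmodType) (I J : finType).
Variables (phi : H -> J -> nat) (psi : H -> I -> nat).
Hypotheses (dphi : divisor_hom phi) (dpsi : divisor_theory psi).

Lemma min_images_le_transfer a0 s b0 t :
  (forall j, min_images phi a0 s j <= min_images phi b0 t j) ->
  forall i, min_images psi a0 s i <= min_images psi b0 t i.
Proof.
have minP := min_images_pointwise_min.
move=> le; apply: (divisor_theory_gcd_dvd dpsi (minP _ _ _ _ _) (minP _ _ _ _ _)).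
exact: divisor_hom_gcd_dvd dphi (minP _ _ _ _ _) (minP _ _ _ _ _) le.
Qed.

Lemma min_images_eq0_transfer a0 s :
  (forall j, min_images phi a0 s j = 0) -> forall i, min_images psi a0 s i = 0.
Proof.
have [[_ phi0 _] _] := dphi; have [[[_ psi0 _] _] _] := dpsi.
move=> eq0 i; apply/eqP; rewrite -leqn0 -(psi0 i).
by apply: (min_images_le_transfer (b0 := 0%R) (t := [::])) => j; rewrite eq0.
Qed.

End MinImagesTransfer.

Section DivisorTheoryCard.
Variables (H : nmodType) (I J : finType).
Variables (phi : H -> J -> nat) (psi : H -> I -> nat).
Hypotheses (dphi : divisor_theory phi) (dpsi : divisor_theory psi).

Lemma min_images_delta_transfer a0 s b0 t i j :
  (forall k, min_images psi a0 s k = (i == k)) ->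
  (forall k, min_images phi b0 t k = (j == k)) ->
  0 < min_images phi a0 s j ->
  forall k, min_images psi b0 t k = (i == k).
Proof.
move=> psi_a phi_b phi_a_j.
have le_delta k : min_images psi b0 t k <= (i == k).
  rewrite -psi_a; apply: (min_images_le_transfer dphi.1 dpsi) => j'.
  by rewrite phi_b; case: eqP => [<-|].
have [k psi_b_k] : exists k, 0 < min_images psi b0 t k.
  apply/existsP; apply: contraT; rewrite negb_exists => /forallP psi_b0.
  suff: min_images phi b0 t j = 0 by rewrite phi_b eqxx.
  apply: (min_images_eq0_transfer dpsi.1 dphi) => k.
  by apply/eqP; rewrite -leqn0 leqNgt psi_b0.
have ik : i = k by apply/eqP; have := le_delta k; case: (i == k) => //=; lia.
move=> k'; have := le_delta k'; rewrite -ik in psi_b_k.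
by case: eqP => [<-|] /=; lia.
Qed.

(* Send i to a coordinate j where the phi-minimum of the generators of e_i is
   positive; by min_images_delta_transfer, e_j then pulls back to e_i. *)
Lemma divisor_theory_card_le : #|I| <= #|J|.
Proof.
have /fin_all_exists [P psiP] : forall i, exists p : H * seq H,
    forall k, min_images psi p.1 p.2 k = (i == k).
  by move=> i; have [a0 [s e]] := dpsi.2 i; exists (a0, s).
have /fin_all_exists [Q phiQ] : forall j, exists p : H * seq H,
    forall k, min_images phi p.1 p.2 k = (j == k).
  by move=> j; have [a0 [s e]] := dphi.2 j; exists (a0, s).
have /fin_all_exists [f fP] : forall i, exists j, 0 < min_images phi (P i).1 (P i).2 j.
  move=> i; apply/existsP; apply: contraT.
  rewrite negb_exists => /forallP phiP0.
  suff: min_images psi (P i).1 (P i).2 i = 0 by rewrite psiP eqxx.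
  apply: (min_images_eq0_transfer dphi.1 dpsi) => j.
  by apply/eqP; rewrite -leqn0 leqNgt phiP0.
apply: (@leq_card _ _ f) => i i' fii'.
have := min_images_delta_transfer (psiP i) (phiQ (f i)) (fP i) i.
rewrite fii' (min_images_delta_transfer (psiP i') (phiQ (f i')) (fP i')) eqxx.
by case: eqP.
Qed.

End DivisorTheoryCard.

Lemma divisor_theory_card (H : nmodType) (I J : finType)
    (psi : H -> I -> nat) (phi : H -> J -> nat) :
  divisor_theory psi -> divisor_theory phi -> #|I| = #|J|.
Proof.
move=> dpsi dphi; apply/eqP.
by rewrite eqn_leq (divisor_theory_card_le dphi dpsi) (divisor_theory_card_le dpsi dphi).
Qed.

Lemma divisor_theory_ord (H : nmodType) (I : finType) (psi : H -> I -> nat) :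
  divisor_theory psi -> exists phi : H -> 'I_#|I| -> nat, divisor_theory phi.
Proof.
move=> dpsi; have [[_ psi0 psiD] _] := dpsi.1.
exists (fun a k => psi a (enum_val k)); split.
  apply: free_hom_divisor_hom => [|a b le].
    by split=> [a|k|a b k]; [exists (enum 'I_#|I|) => k; rewrite mem_enum | |].
  by apply: (divisor_hom_summand dpsi.1) => i; rewrite -(enum_rankK i).
move=> k; have [a0 [s e]] := dpsi.2 (enum_val k); exists a0, s => j.
by rewrite -(inj_eq enum_val_inj); apply: e.
Qed.

Lemma sum_ord_ltn N m : m <= N -> \sum_(k < N) (k < m) = m.
Proof.
move=> le_mN; rewrite -[in RHS](card_ord m) -sum1_card.
rewrite (big_ord_widen N (fun _ => 1)) //.
by rewrite [RHS]big_mkcond; apply: eq_bigr => k _; case: (k < m).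
Qed.

Section Agglomerations.
Variables (V E : finType) (r : E -> {set V}).
Local Notation A := (agglomeration r).

Lemma agg_edge_le (a : A) e v : v \in r e -> a (inr e) <= a (inl v).
Proof. by move=> ve; have /forallP/(_ e)/forallP/(_ v)/implyP := valP a; apply. Qed.

Lemma eq_agg (a b : A) : (forall p, a p = b p) -> a = b.
Proof. by move=> eq_ab; apply/val_inj/ffunP. Qed.

Lemma agg_addE (a b : A) p : (a + b)%R p = a p + b p.
Proof. by rewrite agg_valD ffunE. Qed.

Lemma agg0E p : (0 : A)%R p = 0.
Proof. by rewrite agg_val0 ffunE. Qed.

Lemma agg_sumE n (F : 'I_n -> A) p : (\sum_k F k)%R p = \sum_k F k p.
Proof. exact: (big_morph (fun a : A => a p) (fun a b => agg_addE a b p) (agg0E p)). Qed.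

Section AggOf.
Variable f : V + E -> nat.
Hypothesis f_edge_le : forall e v, v \in r e -> f (inr e) <= f (inl v).

Fact agg_of_subproof : is_agglomeration r [ffun p => f p].
Proof.
by apply/forallP => e; apply/forallP => v; apply/implyP => ve; rewrite !ffunE f_edge_le.
Qed.

Definition agg_of : A := Agg agg_of_subproof.

Lemma agg_ofE p : agg_of p = f p.
Proof. exact: ffunE. Qed.

End AggOf.

Lemma agg_cancel : mcancellative A.
Proof.
move=> a b c eq_abc; apply: eq_agg => p; apply: (@addnI (a p)).
by rewrite -!agg_addE eq_abc.
Qed.

Lemma agg_reduced : mreduced A.
Proof.
move=> a b ab0; apply: eq_agg => p.
by have := congr1 (fun x : A => x p) ab0; rewrite agg_addE !agg0E; lia.
Qed.

Fact agg_level_subproof k (x : A) e v :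
  v \in r e -> (k < x (inr e) : nat) <= (k < x (inl v) : nat).
Proof.
move=> /(agg_edge_le x) le_ev; have [lt_k|//] := ltnP k (x (inr e)).
by rewrite (leq_trans lt_k le_ev).
Qed.

Definition agg_level (k : nat) (x : A) : A :=
  @agg_of (fun p => k < x p) (@agg_level_subproof k x).

Lemma agg_level_sum (x : A) : x = (\sum_(k < \max_p x p) agg_level k x)%R.
Proof.
apply: eq_agg => p; rewrite agg_sumE (eq_bigr (fun k : 'I_ _ => k < x p : nat)).
  by rewrite sum_ord_ltn // (leq_bigmax p).
by move=> k _; rewrite agg_ofE.
Qed.

Definition agg_indicators : seq A :=
  pmap insub [seq [ffun p => nat_of_bool (b p)]
             | b : {ffun V + E -> bool} <- enum {ffun V + E -> bool}].

Lemma agg_level_indicator k x : agg_level k x \in agg_indicators.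
Proof.
rewrite mem_pmap; apply/mapP; exists (val (agg_level k x)); last by rewrite valK.
apply/mapP; exists [ffun p => k < x p]; first by rewrite mem_enum.
by apply/ffunP => p; rewrite !ffunE.
Qed.

Lemma agg_finitely_generated : mfinitely_generated A.
Proof.
apply: (@finitely_generated_by _ agg_indicators) => x; rewrite (agg_level_sum x).
by apply: span_sum => k; apply: agg_level_indicator.
Qed.

Local Notation incidence := {p : E * V | p.2 \in r p.1}.
Local Notation isolated_vertex := {v : V | isolated r v}.
Local Notation prime_index := ((E + incidence) + isolated_vertex)%type.

Definition agg_divisor (a : A) (j : prime_index) : nat :=
  match j with
  | inl (inl e) => a (inr e)
  | inl (inr p) => a (inl (val p).2) - a (inr (val p).1)
  | inr v => a (inl (val v))
  end.

Lemma agg_divisor_free_hom : free_hom agg_divisor.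
Proof.
split=> [a | [[e|[[e v] ve]]|[v iso_v]] | a b [[e|[[e v] ve]]|[v iso_v]]] /=;
  rewrite ?agg0E ?agg_addE //.
- by exists (enum {: prime_index}) => j; rewrite mem_enum.
- by have /= := agg_edge_le a ve; have /= := agg_edge_le b ve; lia.
Qed.

Lemma non_isolated_incident v : ~~ isolated r v -> exists e, v \in r e.
Proof. by rewrite negb_forall => /existsP [e]; rewrite negbK; exists e. Qed.

Lemma agg_divisor_hom : divisor_hom agg_divisor.
Proof.
apply: (free_hom_divisor_hom agg_divisor_free_hom) => a b le_ab.
have le_edge e : a (inr e) <= b (inr e) by apply: (le_ab (inl (inl e))).
have le_inc e v (ve : v \in r e) : a (inl v) - a (inr e) <= b (inl v) - b (inr e).
  by apply: (le_ab (inl (inr (exist _ (e, v) ve)))).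
have le_vertex v : a (inl v) <= b (inl v).
  have [iso_v | /non_isolated_incident [e ve]] := boolP (isolated r v).
    by apply: (le_ab (inr (exist _ v iso_v))).
  have := le_inc e v ve; have := le_edge e.
  have := agg_edge_le a ve; have := agg_edge_le b ve; lia.
have diff_edge_le e v : v \in r e -> b (inr e) - a (inr e) <= b (inl v) - a (inl v).
  move=> ve; have := le_inc e v ve; have := le_edge e.
  have := agg_edge_le a ve; have := agg_edge_le b ve; lia.
exists (@agg_of (fun p => b p - a p) diff_edge_le).
apply: eq_agg => -[v|e]; rewrite agg_addE agg_ofE subnKC //; exact: le_edge.
Qed.

Section Indicator.
Variable P : pred (V + E).
Hypothesis P_closed : forall e v, v \in r e -> P (inr e) -> P (inl v).

Fact agg_ind_subproof e v : v \in r e -> (P (inr e) : nat) <= P (inl v).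
Proof. by move=> /P_closed; case: (P (inr e)) => // ->. Qed.

Definition agg_ind : A := @agg_of (fun p => P p : nat) agg_ind_subproof.

Lemma agg_indE p : agg_ind p = P p.
Proof. exact: agg_ofE. Qed.

Lemma agg_divisor_ind j :
  agg_divisor agg_ind j =
  match j with
  | inl (inl e) => P (inr e)
  | inl (inr p) => P (inl (val p).2) && ~~ P (inr (val p).1)
  | inr v => P (inl (val v))
  end.
Proof.
case: j => [[e|[[e v] ve]]|v] /=; rewrite !agg_indE //.
by have := P_closed ve; case: (P (inr e)) => [->|]; case: (P (inl v)).
Qed.

End Indicator.

Lemma isolated_notin v e : isolated r v -> v \in r e = false.
Proof. by move=> /forallP /(_ e) /negbTE. Qed.

Lemma agg_edge_prime e :
  exists a0 s, forall j, min_images agg_divisor a0 s j = (inl (inl e) == j).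
Proof.
pose star : pred (V + E) := fun p => if p is inl v then v \in r e else p == inr e.
have star_closed e' v : v \in r e' -> star (inr e') -> star (inl v).
  by rewrite /star => ve' /eqP [<-].
exists (agg_ind star_closed), [:: agg_ind (P := predT) (fun _ _ _ _ => isT)].
case=> [[e'|[[e' v] ve]]|[v iso_v]]; rewrite /min_images; cbn [foldr].
all: rewrite !agg_divisor_ind /= /star ?(inj_eq inl_inj) ?(inj_eq inr_inj).
- by rewrite eq_sym; case: (e == e').
- by rewrite min0n.
- by rewrite isolated_notin.
Qed.

Lemma agg_incidence_prime e v (ve : v \in r e) :
  exists a0 s, forall j,
    min_images agg_divisor a0 s j = (inl (inr (exist _ (e, v) ve)) == j).
Proof.
pose vertices : pred (V + E) := fun p => if p is inl _ then true else false.
pose others : pred (V + E) := fun p => p != inr e.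
pose point : pred (V + E) := fun p => p == inl v.
have point_closed e' v' : v' \in r e' -> point (inr e') -> point (inl v') by [].
exists (agg_ind (P := vertices) (fun _ _ _ _ => isT)),
  [:: agg_ind (P := others) (fun _ _ _ _ => isT); agg_ind point_closed].
case=> [[e'|[[e' v'] ve']]|[v' iso_v']]; rewrite /min_images; cbn [foldr].
all: rewrite !agg_divisor_ind /= /vertices /others /point.
all: rewrite ?(inj_eq inl_inj) ?(inj_eq inr_inj).
- by rewrite min0n minn0.
- rewrite -val_eqE /= xpair_eqE negbK [e == e']eq_sym [v == v']eq_sym.
  by case: (e' == e); case: (v' == v).
- have /negbTE -> : v' != v by apply: contraTneq ve => <-; rewrite isolated_notin.
  by rewrite min0n minn0.
Qed.

Lemma agg_isolated_prime v (iso_v : isolated r v) :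
  exists a0 s, forall j, min_images agg_divisor a0 s j = (inr (exist _ v iso_v) == j).
Proof.
pose point : pred (V + E) := fun p => p == inl v.
have point_closed e v' : v' \in r e -> point (inr e) -> point (inl v') by [].
exists (agg_ind point_closed), [::].
case=> [[e|[[e v'] ve]]|[v' iso_v']]; rewrite /min_images; cbn [foldr].
all: rewrite agg_divisor_ind /= /point ?(inj_eq inl_inj) ?(inj_eq inr_inj) //.
- have /negbTE -> // : v' != v by apply: contraTneq ve => ->; rewrite isolated_notin.
- by rewrite -val_eqE /= eq_sym.
Qed.

Lemma agg_divisor_theory : divisor_theory agg_divisor.
Proof.
split=> [|[[e|[[e v] ve]]|[v iso_v]]]; first exact: agg_divisor_hom.
- exact: agg_edge_prime.
- exact: agg_incidence_prime.
- exact: agg_isolated_prime.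
Qed.

Lemma agg_krull : Krull A.
Proof. by split; [apply: agg_cancel | exists _, agg_divisor; apply: agg_divisor_hom]. Qed.

Lemma card_prime_index : is_graph r -> #|{: prime_index}| = 3 * #|E| + n_isolated r.
Proof.
move=> graph; rewrite !card_sum.
have -> : #|{: incidence}| = \sum_e #|r e|.
  under [RHS]eq_bigr do rewrite -sum1_card.
  rewrite card_sig -sum1_card pair_big_dep; apply: eq_bigl => -[e v].
  by rewrite !inE.
rewrite (eq_bigr (fun _ => 2)) // sum_nat_const (eq_card (B := E)) //.
have -> : #|{: isolated_vertex}| = n_isolated r.
  by rewrite card_sig /n_isolated; apply: eq_card => v; rewrite !inE.
lia.
Qed.

Lemma agg_divisor_theory_ord :
  is_graph r ->
  exists phi : A -> 'I_(3 * #|E| + n_isolated r) -> nat, divisor_theory phi.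
Proof.
move=> graph; rewrite -(card_prime_index graph).
exact: divisor_theory_ord agg_divisor_theory.
Qed.

End Agglomerations.

Theorem theorem4p6 (V E : finType) (r : E -> {set V}) :
  is_graph r ->
  [/\ mfinitely_generated (agglomeration r),
      mreduced (agglomeration r),
      Krull (agglomeration r),
      exists phi : agglomeration r -> 'I_(3 * #|E| + n_isolated r) -> nat,
        divisor_theory phi
    & forall (I : finType) (phi : agglomeration r -> I -> nat),
        divisor_theory phi -> #|I| = (3 * #|E| + n_isolated r)%N].
Proof.
move=> graph; have [phi dphi] := agg_divisor_theory_ord graph.
split=> [||||I psi dpsi].
- exact: agg_finitely_generated.
- exact: agg_reduced.
- exact: agg_krull.
- by exists phi.
- by rewrite (divisor_theory_card dpsi dphi) card_ord.
Qed.
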